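(* If problem (BM$_{\mathbf n}$) has a spurious 2-critical point, then $C$ lies in the set $\underline{\mathcal V}\times\overline{\mathcal V}\times\{0^d\}+\operatorname{image}\mathcal{A}^*\subseteq\mathbb{S}^{\mathbf n}\times\mathbb{R}^d$ (Minkowski sum), where $\underline{\mathcal V}=\bigcup_{j\in[k]:\,p_j\le n_j}\big(\mathbb{S}^{n_1}\times\cdots\times\mathbb{S}^{n_{j-1}}\times\mathbb{S}^{n_j}_{n_j-p_j}\times\mathbb{S}^{n_{j+1}}\times\cdots\times\mathbb{S}^{n_k}\big)\subseteq\mathbb{S}^{n_1}\times\cdots\times\mathbb{S}^{n_k}$ and $\overline{\mathcal V}=\bigcup_{(r_{k+1},\dots,r_\ell)}\big(\mathbb{S}^{n_{k+1}}_{n_{k+1}-r_{k+1}}\times\cdots\times\mathbb{S}^{n_\ell}_{n_\ell-r_\ell}\big)\subseteq\mathbb{S}^{n_{k+1}}\times\cdots\times\mathbb{S}^{n_\ell}$, the last union being over all possible rank tuples, and $\mathbb{S}^{r}_{s}=\{Z\in\mathbb{S}^r:\operatorname{rank}Z\le s\}$.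
   Context: Let $\mathbb{S}^{r}$ denote real symmetric $r\times r$ matrices, $\mathbb{S}^r_+$ the PSD cone, $A\bullet B=\operatorname{trace}(A^TB)$. Let $\mathbf n=(n_1,\dots,n_\ell)$, $d\ge 0$, $1\le k\le \ell$, $\mathbb{S}^{\mathbf n}=\mathbb{S}^{n_1}\times\cdots\times\mathbb{S}^{n_\ell}$, $\mathbb{S}^{\mathbf n}_+=\mathbb{S}^{n_1}_+\times\cdots\times\mathbb{S}^{n_\ell}_+$, with the inner product $\langle\cdot,\cdot\rangle$ on $\mathbb{S}^{\mathbf n}\times\mathbb{R}^d$ being the sum of trace inner products and the dot product. Let $C\in\mathbb{S}^{\mathbf n}\times\mathbb{R}^d$, $b\in\mathbb{R}^m$, and $\mathcal{A}:\mathbb{S}^{\mathbf n}\times\mathbb{R}^d\to\mathbb{R}^m$ linear, written $\mathcal{A}(X_1,\dots,X_\ell,x)=\sum_j\mathcal{A}_j(X_j)+\mathcal{A}_0(x)$ with $\mathcal{A}_j(X_j)=(A_{i,j}\bullet X_j)_{i\in[m]}$, $A_{i,j}\in\mathbb{S}^{n_j}$ (this formula also defines $\mathcal{A}_j$ on nonsymmetric matrices); $\mathcal{A}^*$ is its adjoint. Let $\mathscr{X}=\{X=(X_1,\dots,X_\ell,x)\in\mathbb{S}^{\mathbf n}_+\times\mathbb{R}^d:\mathcal{A}(X)=b\}$, assumed nonempty, with $\min_{X\in\mathscr{X}}\langle C,X\rangle$ attained. For positive integers $p_1,\dots,p_k$, let $Y=(Y_1,\dots,Y_k)$, $Y_j\in\mathbb{R}^{n_j\times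 p_j}$, $q(Y)=(Y_1Y_1^T,\dots,Y_kY_k^T)$, $\overline X=(X_{k+1},\dots,X_\ell)$. Problem (BM$_{\mathbf n}$) is $\min_{Y,\overline X,x}\langle C,(q(Y),\overline X,x)\rangle$ subject to $(q(Y),\overline X,x)\in\mathscr{X}$. For $\lambda\in\mathbb{R}^m$ let $S(\lambda)=C-\mathcal{A}^*(\lambda)$ with components $S_j(\lambda)\in\mathbb{S}^{n_j}$ and $s(\lambda)\in\mathbb{R}^d$. A point $(Y,\overline X,x)$ is 2-critical if $(q(Y),\overline X,x)\in\mathscr{X}$ and there is $\lambda\in\mathbb{R}^m$ with $S_j(\lambda)\in\mathbb{S}^{n_j}_+$ for $j>k$, $\sum_{j>k}S_j(\lambda)\bullet X_j=0$, $s(\lambda)=0$, $S_j(\lambda)Y_j=0$ for $j\in[k]$, and, for each $j\in[k]$, $S_j(\lambda)\bullet U_jU_j^T\ge0$ for all $U_j\in\mathbb{R}^{n_j\times p_j}$ with $\mathcal{A}_j(U_jY_j^T)=0$. It is spurious if it is not a global minimizer of (BM$_{\mathbf n}$). A tuple $(r_{k+1},\dots,r_\ell)$ is a possible rank tuple if some $X\in\mathscr{X}$ has $\operatorname{rank}X_j=r_j$ for all $j>k$. *)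

From HB Require Import structures.
From mathcomp Require Import all_boot all_order all_algebra.
From mathcomp Require Import reals.
Set Implicit Arguments. Unset Strict Implicit. Unset Printing Implicit Defensive.
Import Order.TTheory GRing.Theory Num.Theory.
Local Open Scope ring_scope.

(* Blocks are indexed by j : 'I_l (paper: j = 1..l, here j = 0..l-1).
   "j in [k]" (paper) is  (j < k)%N  here; "j > k" (paper) is (k <= j)%N here. *)

Definition mdot (R : realType) (r : nat) (A B : 'M[R]_r) : R := \tr (A^T *m B).

Definition symm (R : realType) (r : nat) (A : 'M[R]_r) : Prop := A^T = A.

Definition psd (R : realType) (r : nat) (A : 'M[R]_r) : Prop :=
  symm A /\ forall v : 'cV[R]_r, 0 <= (v^T *m A *m v) 0 0.

Definition low_rank (R : realType) (r s : nat) (Z : 'M[R]_r) : Prop :=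
  symm Z /\ (\rank Z <= s)%N.

(* Data of the SDP:  min <C,X>  s.t.  A(X) = b, X in S^n_+ x R^d. *)
Record SDP (R : realType) := MkSDP {
  nb : nat;                                   (* l : number of PSD blocks *)
  bsz : 'I_nb -> nat;
  dfree : nat;
  ncons : nat;
  Amat : 'I_ncons -> forall j : 'I_nb, 'M[R]_(bsz j);
  Avec : 'I_ncons -> 'rV[R]_dfree;            (* A_0(x)_i = Avec i . x *)
  bvec : 'I_ncons -> R;
  Cmat : forall j : 'I_nb, 'M[R]_(bsz j);
  cvec : 'rV[R]_dfree
}.
Arguments nb {R} s.  Arguments bsz {R} s _.  Arguments dfree {R} s.
Arguments ncons {R} s.  Arguments Amat {R} s _ _.  Arguments Avec {R} s _.
Arguments bvec {R} s _.  Arguments Cmat {R} s _.  Arguments cvec {R} s.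

Section SDPdefs.
Variables (R : realType) (P : SDP R).

Definition vdot (u v : 'rV[R]_(dfree P)) : R := (u *m v^T) 0 0.

Definition SDP_wf : Prop :=
  (forall i j, symm (Amat P i j)) /\ (forall j, symm (Cmat P j)).

Definition Aop (X : forall j : 'I_(nb P), 'M[R]_(bsz P j)) (x : 'rV[R]_(dfree P))
  (i : 'I_(ncons P)) : R :=
  \sum_(j < nb P) mdot (Amat P i j) (X j) + vdot (Avec P i) x.

Definition feasible (X : forall j : 'I_(nb P), 'M[R]_(bsz P j)) (x : 'rV[R]_(dfree P))
  : Prop :=
  (forall j, psd (X j)) /\ forall i, Aop X x i = bvec P i.

Definition obj (X : forall j : 'I_(nb P), 'M[R]_(bsz P j)) (x : 'rV[R]_(dfree P)) : R :=
  \sum_(j < nb P) mdot (Cmat P j) (X j) + vdot (cvec P) x.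

Definition sdp_min_attained : Prop :=
  exists X x, feasible X x /\ forall X' x', feasible X' x' -> obj X x <= obj X' x'.

Definition Sblk (lam : 'I_(ncons P) -> R) (j : 'I_(nb P)) : 'M[R]_(bsz P j) :=
  Cmat P j - \sum_(i < ncons P) lam i *: Amat P i j.
Definition svec (lam : 'I_(ncons P) -> R) : 'rV[R]_(dfree P) :=
  cvec P - \sum_(i < ncons P) lam i *: Avec P i.

Definition Ablk (j : 'I_(nb P)) (M : 'M[R]_(bsz P j)) (i : 'I_(ncons P)) : R :=
  mdot (Amat P i j) M.

Variables (k : nat) (p : 'I_(nb P) -> nat).

(* Burer-Monteiro variables: Y_j in R^{n_j x p_j} (used for j < k),
   Xbar_j (used for j >= k), x.  The associated point (q(Y), Xbar, x). *)
Definition BMpoint (Y : forall j : 'I_(nb P), 'M[R]_(bsz P j, p j))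
  (Xb : forall j : 'I_(nb P), 'M[R]_(bsz P j)) : forall j : 'I_(nb P), 'M[R]_(bsz P j) :=
  fun j => if (j < k)%N then Y j *m (Y j)^T else Xb j.

Definition BM_feasible Y Xb x : Prop := feasible (BMpoint Y Xb) x.

Definition BM_global_min Y Xb x : Prop :=
  BM_feasible Y Xb x /\
  forall Y' Xb' x', BM_feasible Y' Xb' x' ->
    obj (BMpoint Y Xb) x <= obj (BMpoint Y' Xb') x'.

Definition two_critical Y Xb x : Prop :=
  BM_feasible Y Xb x /\
  exists lam : 'I_(ncons P) -> R,
    [/\ forall j : 'I_(nb P), (k <= j)%N -> psd (Sblk lam j),
        \sum_(j < nb P | (k <= j)%N) mdot (Sblk lam j) (Xb j) = 0,
        svec lam = 0,
        forall j : 'I_(nb P), (j < k)%N -> Sblk lam j *m Y j = 0 &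
        forall j : 'I_(nb P), (j < k)%N ->
          forall U : 'M[R]_(bsz P j, p j),
            (forall i, Ablk (U *m (Y j)^T) i = 0) ->
            0 <= mdot (Sblk lam j) (U *m U^T)].

Definition spurious Y Xb x : Prop := ~ BM_global_min Y Xb x.

(* (r_{k+1},...,r_l) is a possible rank tuple (only entries j >= k matter) *)
Definition possible_rank_tuple (r : 'I_(nb P) -> nat) : Prop :=
  exists X x, feasible X x /\ forall j : 'I_(nb P), (k <= j)%N -> \rank (X j) = r j.

Definition in_Vunder (Z : forall j : 'I_(nb P), 'M[R]_(bsz P j)) : Prop :=
  (forall j : 'I_(nb P), (j < k)%N -> symm (Z j)) /\
  exists j : 'I_(nb P), [/\ (j < k)%N, (p j <= bsz P j)%N &
                           low_rank (bsz P j - p j) (Z j)].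

Definition in_Vover (Z : forall j : 'I_(nb P), 'M[R]_(bsz P j)) : Prop :=
  exists r, possible_rank_tuple r /\
    forall j : 'I_(nb P), (k <= j)%N -> low_rank (bsz P j - r j) (Z j).

Definition C_in_bad_set : Prop :=
  exists (Z : forall j : 'I_(nb P), 'M[R]_(bsz P j)) (z : 'rV[R]_(dfree P))
         (lam : 'I_(ncons P) -> R),
    [/\ in_Vunder Z, in_Vover Z, z = 0,
        forall j, Cmat P j = Z j + \sum_(i < ncons P) lam i *: Amat P i j &
        cvec P = z + \sum_(i < ncons P) lam i *: Avec P i].

End SDPdefs.

From Pilot Require Import Defs.
From HB Require Import structures.
From mathcomp Require Import all_boot all_order all_algebra.
From mathcomp Require Import reals.
From mathcomp Require Import ring lra zify.
From Stdlib Require Import Classical.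
Set Implicit Arguments. Unset Strict Implicit. Unset Printing Implicit Defensive.
Import Order.TTheory GRing.Theory Num.Theory.
Local Open Scope ring_scope.

(* The witness is S := C - A^*(lam) for the multiplier lam of the 2-critical
   point, so that C = S + A^*(lam) with s(lam) = 0.
   For j > k, S_j and X_j are PSD with S_j . X_j = 0, hence S_j X_j = 0 and
   rank S_j <= n_j - rank X_j, the ranks of X_j forming a possible rank tuple.
   For j <= k, if all S_j were PSD then <C,X> = sum_j S_j . X_j + lam . b would
   make the point a global minimiser; so some S_j has a direction v with
   v^T S_j v < 0.  Were rank Y_j < p_j, a nonzero w with w^T Y_j^T = 0 would
   give U = v w^T with A_j(U Y_j^T) = 0 and S_j . U U^T = |w|^2 v^T S_j v < 0,
   against second-order criticality.  So rank Y_j = p_j, and S_j Y_j = 0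
   yields rank S_j <= n_j - p_j. *)

Lemma quadratic_ge0_discriminant (R : realType) (a b c : R) :
  (forall t, 0 <= a + 2 * t * b + t ^+ 2 * c) -> 0 <= c -> b ^+ 2 <= a * c.
Proof.
move=> H; rewrite le0r => /orP[/eqP c0|c0].
  subst c; rewrite mulr0.
  have [->|b0] := eqVneq b 0; first by rewrite expr0n.
  have := H (- (a + 1) / (2 * b)).
  have -> : 2 * (- (a + 1) / (2 * b)) * b = - (a + 1) by field.
  by rewrite mulr0 => h; lra.
have := H (- b / c).
have -> : a + 2 * (- b / c) * b + (- b / c) ^+ 2 * c = a - b ^+ 2 / c.
  by field; rewrite gt_eqF.
by rewrite subr_ge0 ler_pdivrMr.
Qed.

Section PSD.
Variables (R : realType) (n : nat).
Implicit Types (A S T X : 'M[R]_n) (v w : 'cV[R]_n).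

Definition qform A v : R := (v^T *m A *m v) 0 0.

Lemma qformDZ A v w t : symm A ->
  qform A (v + t *: w) = qform A v + 2 * t * (w^T *m A *m v) 0 0 + t ^+ 2 * qform A w.
Proof.
move=> sA; rewrite /qform.
have cross : (v^T *m A *m w) 0 0 = (w^T *m A *m v) 0 0.
  have -> : v^T *m A *m w = (w^T *m A *m v)^T by rewrite !trmx_mul trmxK sA mulmxA.
  by rewrite mxE.
rewrite [(_ + _)^T]linearD /= [(_ *: _)^T]linearZ /= !mulmxDl !mulmxDr -!scalemxAl -!scalemxAr.
by move: cross; rewrite !mxE => ->; ring.
Qed.

Lemma psd_cauchy_schwarz X v w : psd X ->
  ((w^T *m X *m v) 0 0) ^+ 2 <= qform X v * qform X w.
Proof.
move=> [sX pX]; apply: quadratic_ge0_discriminant; last exact: pX.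
by move=> t; rewrite -qformDZ //; apply: pX.
Qed.

Lemma bilin_delta X i j : ((delta_mx j 0 : 'cV_n)^T *m X *m (delta_mx i 0 : 'cV_n)) 0 0 = X j i.
Proof. by rewrite trmx_delta -rowE -colE !mxE. Qed.

Lemma psd_diag_ge0 X i : psd X -> 0 <= X i i.
Proof. by move=> [_ /(_ (delta_mx i 0))]; rewrite /qform bilin_delta. Qed.

Lemma psd_entry_sqr X i j : psd X -> X j i ^+ 2 <= X i i * X j j.
Proof.
by move=> /(psd_cauchy_schwarz (delta_mx i 0) (delta_mx j 0)); rewrite /qform !bilin_delta.
Qed.

Lemma psd_diag_eq0 X : psd X -> (forall i, X i i = 0) -> X = 0.
Proof.
move=> pX d0; apply/matrixP => j i; rewrite mxE.
have := psd_entry_sqr i j pX; rewrite d0 mul0r => h.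
by apply/eqP; rewrite -sqrf_eq0 eq_le h sqr_ge0.
Qed.

Lemma psd_qform_eq0 X v : psd X -> qform X v = 0 -> X *m v = 0.
Proof.
move=> pX Xv0; apply/colP => i; rewrite [RHS]mxE.
have := psd_cauchy_schwarz v (delta_mx i 0) pX.
rewrite Xv0 mul0r trmx_delta -mulmxA -rowE mxE => h.
by apply/eqP; rewrite -sqrf_eq0 eq_le h sqr_ge0.
Qed.

Lemma not_psd_qform_lt0 S : symm S -> ~ psd S -> exists v, qform S v < 0.
Proof.
move=> sS nS; apply: NNPP => none; apply: nS; split=> // v.
by rewrite leNgt; apply/negP => Sv; apply: none; exists v.
Qed.

(* A symmetric Gaussian elimination step (Schur complement) on the pivot X i i. *)
Definition psd_deflate X i : 'M[R]_n := X - (X i i)^-1 *: (col i X *m (col i X)^T).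

Lemma psd_deflate_psd X i : psd X -> X i i != 0 -> psd (psd_deflate X i).
Proof.
move=> pX Xi0; have [sX _] := pX.
have Xi_gt0 : 0 < X i i by rewrite lt_def Xi0 psd_diag_ge0.
split.
  by rewrite /symm /psd_deflate linearB /= linearZ /= trmx_mul trmxK sX.
move=> v; rewrite /psd_deflate mulmxBr mulmxBl -scalemxAr -scalemxAl.
have -> : v^T *m (col i X *m (col i X)^T) *m v
    = ((delta_mx i 0 : 'cV_n)^T *m X *m v)^T *m ((delta_mx i 0 : 'cV_n)^T *m X *m v).
  by rewrite colE !trmx_mul !trmxK sX !mulmxA.
have := psd_cauchy_schwarz v (delta_mx i 0) pX.
rewrite {2}/qform bilin_delta /qform; move: (_ *m X *m v) => b.
rewrite !mxE big_ord1 !mxE -expr2 subr_ge0 ler_pdivrMl //.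
by rewrite mulrC.
Qed.

Lemma psd_deflate_diag X i j :
  psd_deflate X i j j = X j j - (X i i)^-1 * X j i ^+ 2.
Proof. by rewrite !mxE big_ord1 !mxE expr2. Qed.

Lemma psd_deflate_support X i : psd X -> X i i != 0 ->
  (#|[set j | psd_deflate X i j j != 0%R]| < #|[set j | X j j != 0%R]|)%N.
Proof.
move=> pX Xi0; apply: proper_card; apply/properP; split.
  apply/subsetP => j; rewrite !inE; apply: contraNN => /eqP Xj0.
  have := psd_entry_sqr i j pX; rewrite Xj0 mulr0 => h.
  have Xji0 : X j i = 0 by apply/eqP; rewrite -sqrf_eq0 eq_le h sqr_ge0.
  by rewrite psd_deflate_diag Xj0 Xji0 expr0n mulr0 subrr.
exists i; first by rewrite inE.
by rewrite inE psd_deflate_diag negbK expr2 mulrA mulVf // mul1r subrr.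
Qed.

Lemma psd_gram X : psd X -> exists s : seq 'cV[R]_n, X = \sum_(v <- s) v *m v^T.
Proof.
move: {2}#|[set j | X j j != 0]| (leqnn #|[set j | X j j != 0]|) => N.
elim: N X => [|N IH] X supp pX.
  exists [::]; rewrite big_nil; apply: psd_diag_eq0 => // i.
  apply/eqP; apply: contraTT supp => Xi0; rewrite -ltnNge card_gt0.
  by apply/set0Pn; exists i; rewrite inE.
have [i /= Xi0|none] := pickP [pred i | X i i != 0]; last first.
  exists [::]; rewrite big_nil; apply: psd_diag_eq0 => // i.
  by apply/eqP/negbFE/none.
have [s Hs] := IH _ (leq_trans (psd_deflate_support pX Xi0) supp)
                   (psd_deflate_psd pX Xi0).
have inv_ge0 : 0 <= (X i i)^-1 by rewrite invr_ge0 psd_diag_ge0.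
exists ((Num.sqrt (X i i)^-1 *: col i X) :: s); rewrite big_cons -Hs.
rewrite linearZ /= -scalemxAl -scalemxAr scalerA -expr2 sqr_sqrtr //.
by rewrite addrC subrK.
Qed.

Lemma mxtrace_mul_gram T v : \tr (T *m (v *m v^T)) = qform T v.
Proof. by rewrite mulmxA mxtrace_mulC /qform /mxtrace big_ord1 mulmxA. Qed.

Lemma psd_mxtrace_mul_ge0 T X : psd T -> psd X -> 0 <= \tr (T *m X).
Proof.
move=> [_ pT] /psd_gram[s ->]; rewrite mulmx_sumr raddf_sum /=.
by apply: sumr_ge0 => v _; rewrite mxtrace_mul_gram; exact: pT.
Qed.

Lemma psd_mxtrace_mul_eq0 T X : psd T -> psd X -> \tr (T *m X) = 0 -> T *m X = 0.
Proof.
move=> pT /psd_gram[s ->]; rewrite mulmx_sumr raddf_sum /= => /eqP.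
rewrite psumr_eq0 => [/allP Ts0|v _]; last first.
  by rewrite mxtrace_mul_gram; case: pT => _; exact.
rewrite big_seq big1 // => v /Ts0 /eqP; rewrite mxtrace_mul_gram.
by move=> /(psd_qform_eq0 pT); rewrite mulmxA => ->; rewrite mul0mx.
Qed.

End PSD.

Section TraceInnerProduct.
Variables (R : realType) (n : nat).

Lemma mdot_symmE (S X : 'M[R]_n) : symm S -> mdot S X = \tr (S *m X).
Proof. by rewrite /mdot => ->. Qed.

Lemma mdotDl (A B X : 'M[R]_n) : mdot (A + B) X = mdot A X + mdot B X.
Proof. by rewrite /mdot linearD /= mulmxDl mxtraceD. Qed.

Lemma mdot_suml (I : finType) (c : I -> R) (A : I -> 'M[R]_n) (X : 'M[R]_n) :
  mdot (\sum_i c i *: A i) X = \sum_i c i * mdot (A i) X.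
Proof.
rewrite /mdot raddf_sum /= mulmx_suml raddf_sum /=; apply: eq_bigr => i _.
by rewrite linearZ /= -scalemxAl mxtraceZ.
Qed.

End TraceInnerProduct.

Lemma psd_sum_mxtrace_eq0 (R : realType) (I : finType) (D : pred I)
    (n : I -> nat) (S X : forall i, 'M[R]_(n i)) :
  (forall i, D i -> psd (S i)) -> (forall i, D i -> psd (X i)) ->
  \sum_(i | D i) \tr (S i *m X i) = 0 -> forall i, D i -> S i *m X i = 0.
Proof.
move=> pS pX sum0 i Di.
have ge0 j : D j -> 0 <= \tr (S j *m X j).
  by move=> Dj; apply: psd_mxtrace_mul_ge0; [exact: pS | exact: pX].
apply: psd_mxtrace_mul_eq0; [exact: pS | exact: pX | exact: psumr_eq0P ge0 sum0 i Di].
Qed.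

Section Rank.
Variables (R : realType) (n p : nat).

Lemma rank_annihilator_le (S : 'M[R]_n) (Y : 'M[R]_(n, p)) :
  S *m Y = 0 -> (\rank S <= n - \rank Y)%N.
Proof. by move=> /mulmx0_rank_max; lia. Qed.

Lemma mul_tr_row_gt0 (w : 'rV[R]_p) : w != 0 -> 0 < (w *m w^T) 0 0.
Proof.
move=> w0; rewrite mxE lt_def sumr_ge0 ?andbT => [|j _]; last first.
  by rewrite !mxE -expr2 sqr_ge0.
apply: contra w0 => /eqP; under eq_bigr do rewrite mxE -expr2.
move=> /(psumr_eq0P (fun j _ => sqr_ge0 (w 0 j))) w2_0.
by apply/eqP/rowP => j; rewrite mxE; apply/eqP; rewrite -sqrf_eq0; apply/eqP/w2_0.
Qed.

(* U := v w with w a nonzero row of kermx Y^T has S . U U^T = |w|^2 v^T S v. *)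
Lemma rank_deficient_descent (S : 'M[R]_n) (Y : 'M[R]_(n, p)) (v : 'cV[R]_n) :
  symm S -> qform S v < 0 -> (\rank Y < p)%N ->
  exists U : 'M[R]_(n, p), U *m Y^T = 0 /\ mdot S (U *m U^T) < 0.
Proof.
move=> sS Sv rY.
have : kermx Y^T != 0.
  by rewrite -mxrank_eq0 mxrank_ker mxrank_tr subn_eq0 -ltnNge.
move=> /rowV0Pn[w /[!sub_kermx] /eqP wY w0].
exists (v *m w); split; first by rewrite -mulmxA wY mulmx0.
have -> : v *m w *m (v *m w)^T = (w *m w^T) 0 0 *: (v *m v^T).
  by rewrite trmx_mul -!mulmxA (mulmxA w) {1}[w *m w^T]mx11_scalar mul_scalar_mx -scalemxAr.
rewrite /mdot sS linearZ /= mxtraceZ mxtrace_mul_gram.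
by rewrite pmulr_rlt0 // mul_tr_row_gt0.
Qed.

End Rank.

Section Duality.
Variables (R : realType) (P : SDP R).
Implicit Types (lam : 'I_(Defs.ncons P) -> R) (X : forall j : 'I_(nb P), 'M[R]_(bsz P j))
  (x : 'rV[R]_(dfree P)).

Lemma vdot_suml (I : finType) (c : I -> R) a x :
  vdot (\sum_i c i *: a i) x = \sum_i c i * vdot (P:=P) (a i) x.
Proof.
by rewrite /vdot mulmx_suml summxE; apply: eq_bigr => i _; rewrite -scalemxAl mxE.
Qed.

Lemma Sblk_symm lam j : SDP_wf P -> symm (Sblk lam j).
Proof.
move=> [symA symC]; rewrite /symm /Sblk linearB /= raddf_sum /= symC.
by congr (_ - _); apply: eq_bigr => i _; rewrite linearZ /= symA.
Qed.

Lemma Cmat_Sblk lam j : Cmat P j = Sblk lam j + \sum_i lam i *: Amat P i j.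
Proof. by rewrite subrK. Qed.

Lemma cvec_svec0 lam : svec lam = 0 -> cvec P = \sum_i lam i *: Avec P i.
Proof. exact: subr0_eq. Qed.

Lemma obj_dual lam X x : svec lam = 0 -> (forall i, Aop X x i = bvec P i) ->
  obj X x = \sum_j mdot (Sblk lam j) (X j) + \sum_i lam i * bvec P i.
Proof.
move=> s0 AX; rewrite /obj (cvec_svec0 s0) vdot_suml.
under eq_bigr do rewrite (Cmat_Sblk lam) mdotDl mdot_suml.
rewrite big_split /= -addrA; congr (_ + _).
under [in RHS]eq_bigr do rewrite -AX /Aop mulrDr mulr_sumr.
by rewrite big_split /= exchange_big.
Qed.

Variables (k : nat) (p : 'I_(nb P) -> nat).
Implicit Types (Y : forall j : 'I_(nb P), 'M[R]_(bsz P j, p j)).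

Lemma BMpoint_lt Y X (j : 'I_(nb P)) : (j < k)%N -> BMpoint k Y X j = Y j *m (Y j)^T.
Proof. by rewrite /BMpoint => ->. Qed.

Lemma BMpoint_ge Y X (j : 'I_(nb P)) : (k <= j)%N -> BMpoint k Y X j = X j.
Proof. by rewrite /BMpoint ltnNge => ->. Qed.

(* By obj_dual, <C,X'> - <C,X> = sum_j S_j . X'_j >= 0 for every feasible X'. *)
Lemma BM_global_min_of_psd_multiplier lam Y Xb x :
  SDP_wf P -> BM_feasible k Y Xb x -> svec lam = 0 ->
  (forall j, psd (Sblk lam j)) ->
  (forall j : 'I_(nb P), (j < k)%N -> Sblk lam j *m Y j = 0) ->
  \sum_(j < nb P | (k <= j)%N) mdot (Sblk lam j) (Xb j) = 0 ->
  BM_global_min k Y Xb x.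
Proof.
move=> wf [pX AX] s0 pS SY slack; split; first by split.
have symS j : symm (Sblk lam j) := Sblk_symm lam j wf.
move=> Y' Xb' x' [pX' AX']; rewrite (obj_dual s0 AX) (obj_dual s0 AX') lerD2r.
rewrite (bigID (fun j : 'I_(nb P) => (j < k)%N)) /= big1 => [|j jk]; last first.
  by rewrite BMpoint_lt // (mdot_symmE _ (symS j)) mulmxA SY // mul0mx mxtrace0.
have -> : \sum_(j < nb P | ~~ (j < k)%N) mdot (Sblk lam j) (BMpoint k Y Xb j) = 0.
  rewrite -[RHS]slack; apply: eq_big => [j|j kj]; first by rewrite -leqNgt.
  by rewrite BMpoint_ge // leqNgt.
rewrite add0r; apply: sumr_ge0 => j _; rewrite (mdot_symmE _ (symS j)).
exact: psd_mxtrace_mul_ge0.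
Qed.

End Duality.

Theorem theorem12 (R : realType) (P : SDP R) (k : nat) (p : 'I_(nb P) -> nat) :
  SDP_wf P ->
  (1 <= k <= nb P)%N ->
  (forall j : 'I_(nb P), (j < k)%N -> (0 < p j)%N) ->
  sdp_min_attained P ->
  (exists (Y : forall j : 'I_(nb P), 'M[R]_(bsz P j, p j))
          (Xb : forall j : 'I_(nb P), 'M[R]_(bsz P j)) (x : 'rV[R]_(dfree P)),
      two_critical k Y Xb x /\ spurious k Y Xb x) ->
  C_in_bad_set k p.
Proof.
move=> wf _ _ _ [Y [Xb [x [[feas [lam [pS slack s0 SY second]]] spur]]]].
have [pX _] := feas.
have symS j : symm (Sblk lam j) := Sblk_symm lam j wf.
have SXb0 : forall j : 'I_(nb P), (k <= j)%N -> Sblk lam j *m Xb j = 0.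
  apply: psd_sum_mxtrace_eq0 => [//|j kj|]; first by have := pX j; rewrite BMpoint_ge.
  by rewrite -[RHS]slack; apply: eq_bigr => j _; rewrite (mdot_symmE _ (symS j)).
have [j jk nS] : exists2 j : 'I_(nb P), (j < k)%N & ~ psd (Sblk lam j).
  apply: NNPP => none; apply: spur.
  apply: (BM_global_min_of_psd_multiplier wf feas s0) => // j.
  have [jk|/pS//] := ltnP j k; apply: NNPP => nSj; apply: none; exists j => //.
have [v Sv] := not_psd_qform_lt0 (symS j) nS.
have rY : \rank (Y j) = p j.
  apply/eqP; rewrite eqn_leq rank_leq_col leqNgt; apply/negP.
  move=> /(rank_deficient_descent (symS j) Sv)[U [UY0 SU]].
  have Ablk0 i : Ablk (U *m (Y j)^T) i = 0 by rewrite /Ablk UY0 /mdot mulmx0 mxtrace0.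
  by move: (second j jk U Ablk0); rewrite leNgt SU.
exists (Sblk lam), 0, lam; split=> //.
- split=> //; exists j; split=> //; first by rewrite -rY rank_leq_row.
  by split=> //; rewrite -rY; apply: rank_annihilator_le; exact: SY.
- exists (fun j => \rank (BMpoint k Y Xb j)); split; first by exists (BMpoint k Y Xb), x.
  move=> i ki; split=> //; rewrite BMpoint_ge //.
  exact: rank_annihilator_le (SXb0 i ki).
- by move=> i; rewrite (Cmat_Sblk lam).
- by rewrite add0r (cvec_svec0 s0).
Qed.
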